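(* Let $G$ and $H$ be graphs, each with at least two vertices. If there exist $r_1,r_2\in(0,1)$ with $r_1^2+r_2^2=1$ such that $G$ admits a spherical embedding of dimension $\operatorname{sdim}G$ and radius $r_1$ and $H$ admits a spherical embedding of dimension $\operatorname{sdim}H$ and radius $r_2$, then $\dim(G+H)=\operatorname{sdim}G+\operatorname{sdim}H$. Otherwise $\dim(G+H)>\operatorname{sdim}G+\operatorname{sdim}H$.
   Context: All graphs are finite and simple. A unit-distance embedding of a graph $G$ in $\mathbb{R}^n$ is an injective map $f$ from the vertex set of $G$ to $\mathbb{R}^n$ such that $|f(u)-f(v)|=1$ for every edge $uv$ and no point $f(w)$ lies on the segment $[f(u),f(v)]$ for an edge $uv$ with $w\notin\{u,v\}$ (edges may cross one another). The dimension $\dim G$ is the least natural number $n$ such that $G$ has a unit-distance embedding in $\mathbb{R}^n$. $G$ admits a spherical embedding of dimension $k$ and radius $r$ if $G$ has a unit-distance embedding in $\mathbb{R}^k$ all of whose vertices lie on a sphere $\{x\in\mathbb{R}^k:|x-c|=r\}$. The spherical dimension $\operatorname{sdim}G$ is the least $k$ such that $G$ admits a spherical embedding of dimension $k$ and some radius $r<1$ (by convention $\operatorname{sdim}$ of the graph with no vertices is $-\infty$ and $\operatorname{sdim}K_1=0$). The sum $G+H$ is obtained from disjoint copies of $G$ and $H$ by adding all edges between a vertex of $G$ and a vertex of $H$. *)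

From HB Require Import structures.
From mathcomp Require Import all_boot all_order all_algebra.
From mathcomp Require Import reals.
Set Implicit Arguments. Unset Strict Implicit. Unset Printing Implicit Defensive.
Import Order.TTheory GRing.Theory Num.Theory.
Local Open Scope ring_scope.

(* A finite simple graph is a finType V with a symmetric irreflexive e : rel V
   (these two properties are assumed as hypotheses where needed). *)

Definition enorm (R : realType) (n : nat) (x : 'rV[R]_n) : R :=
  Num.sqrt (\sum_(i < n) (x 0 i) ^+ 2).

Definition on_segment (R : realType) (n : nat) (a b w : 'rV[R]_n) : Prop :=
  exists t : R, 0 <= t <= 1 /\ w = (1 - t) *: a + t *: b.

Definition unit_dist_emb (R : realType) (V : finType) (e : rel V) (n : nat)
  (f : V -> 'rV[R]_n) : Prop :=
  injective f /\
  (forall u v, e u v -> enorm (f u - f v) = 1) /\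
  (forall u v w, e u v -> w != u -> w != v -> ~ on_segment (f u) (f v) (f w)).

Definition embeddable (R : realType) (V : finType) (e : rel V) (n : nat) : Prop :=
  exists f : V -> 'rV[R]_n, unit_dist_emb e f.

Definition is_dim (R : realType) (V : finType) (e : rel V) (n : nat) : Prop :=
  embeddable R e n /\ forall m, (m < n)%N -> ~ embeddable R e m.

Definition sph_embeddable (R : realType) (V : finType) (e : rel V) (k : nat) (r : R) : Prop :=
  exists (f : V -> 'rV[R]_k) (c : 'rV[R]_k),
    unit_dist_emb e f /\ forall v, enorm (f v - c) = r.

Definition sph_small (R : realType) (V : finType) (e : rel V) (k : nat) : Prop :=
  exists r : R, r < 1 /\ sph_embeddable e k r.

Definition is_sdim (R : realType) (V : finType) (e : rel V) (k : nat) : Prop :=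
  sph_small R e k /\ forall m, (m < k)%N -> ~ sph_small R e m.

Definition graph_sum (V1 V2 : finType) (e1 : rel V1) (e2 : rel V2) : rel (V1 + V2)%type :=
  fun x y =>
    match x, y with
    | inl a, inl b => e1 a b
    | inr a, inr b => e2 a b
    | _, _ => true
    end.

From HB Require Import structures.
From mathcomp Require Import all_boot all_order all_algebra.
From mathcomp Require Import reals ring lra zify.
From Stdlib Require Import Classical_Prop.
Import Order.TTheory GRing.Theory Num.Theory.
Set Implicit Arguments. Unset Strict Implicit. Unset Printing Implicit Defensive.
Local Open Scope ring_scope.

(* Upper bound: centre spherical embeddings of G (radius r1, in R^k1) and H (radius
   r2, in R^k2) at the origin and place them in the two orthogonal factors of
   R^(k1 + k2); a vertex of G and a vertex of H are then at distance
   sqrt (r1^2 + r2^2), so when r1^2 + r2^2 = 1 this is an embedding of G + H.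

   Lower bound: in a unit-distance embedding of G + H in R^n, every difference of two
   vertices of G is orthogonal to every difference of two vertices of H (all cross
   distances are 1), so the affine spans of the two halves have orthogonal directions
   U and W, of dimensions a and b with a + b <= n.  Seen from a fixed vertex of H, G
   lies on a sphere in its affine span, of radius r1 = sqrt (1 - |d'|^2) where d' is
   the offset of that vertex from the span; as G and H have two vertices each,
   0 < r1 < 1, and symmetrically for H.  If a + b = n the offsets are the two
   components of a unit vector along W and U, whence r1^2 + r2^2 = 1. *)

Section InnerProduct.
Variable R : realFieldType.
Implicit Types n : nat.

Definition dot n (x y : 'rV[R]_n) : R := (x *m y^T) 0 0.

Lemma dotE n (x y : 'rV[R]_n) : dot x y = \sum_(i < n) x 0 i * y 0 i.
Proof. by rewrite /dot mxE; apply: eq_bigr => i _; rewrite mxE. Qed.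

Lemma dotC n (x y : 'rV[R]_n) : dot x y = dot y x.
Proof. by rewrite !dotE; apply: eq_bigr => i _; rewrite mulrC. Qed.

Lemma dot_mulmx n m (x : 'rV[R]_n) (M : 'M[R]_(n, m)) (y : 'rV[R]_m) :
  dot (x *m M) y = dot x (y *m M^T).
Proof. by rewrite /dot trmx_mul trmxK mulmxA. Qed.

Lemma dotDl n (x y z : 'rV[R]_n) : dot (x + y) z = dot x z + dot y z.
Proof. by rewrite /dot mulmxDl mxE. Qed.

Lemma dotZl n (a : R) (x z : 'rV[R]_n) : dot (a *: x) z = a * dot x z.
Proof. by rewrite /dot -scalemxAl mxE. Qed.

Lemma dotZr n (a : R) (x z : 'rV[R]_n) : dot z (a *: x) = a * dot z x.
Proof. by rewrite dotC dotZl dotC. Qed.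

Lemma dotNl n (x z : 'rV[R]_n) : dot (- x) z = - dot x z.
Proof. by rewrite /dot mulNmx mxE. Qed.

Lemma dotBl n (x y z : 'rV[R]_n) : dot (x - y) z = dot x z - dot y z.
Proof. by rewrite dotDl dotNl. Qed.

Lemma dotDr n (x y z : 'rV[R]_n) : dot z (x + y) = dot z x + dot z y.
Proof. by rewrite dotC dotDl !(dotC z). Qed.

Lemma dotBr n (x y z : 'rV[R]_n) : dot z (x - y) = dot z x - dot z y.
Proof. by rewrite dotC dotBl !(dotC z). Qed.

Lemma dot0l n (z : 'rV[R]_n) : dot 0 z = 0.
Proof. by rewrite /dot mul0mx mxE. Qed.

Lemma dot0r n (z : 'rV[R]_n) : dot z 0 = 0.
Proof. by rewrite dotC dot0l. Qed.

Lemma dotNN n (x : 'rV[R]_n) : dot (- x) (- x) = dot x x.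
Proof. by rewrite dotNl dotC dotNl opprK. Qed.

Lemma dot_row_mx n m (a c : 'rV[R]_n) (b d : 'rV[R]_m) :
  dot (row_mx a b) (row_mx c d) = dot a c + dot b d.
Proof. by rewrite /dot tr_row_mx mul_row_col mxE. Qed.

Lemma dot_row n m (x : 'rV[R]_n) (Q : 'M[R]_(m, n)) i : dot x (row i Q) = (x *m Q^T) 0 i.
Proof. by rewrite /dot !mxE; apply: eq_bigr => k _; rewrite !mxE. Qed.

Lemma dot_ge0 n (x : 'rV[R]_n) : 0 <= dot x x.
Proof. by rewrite dotE; apply: sumr_ge0 => i _; rewrite -expr2 sqr_ge0. Qed.

Lemma dot_eq0 n (x : 'rV[R]_n) : dot x x = 0 -> x = 0.
Proof.
rewrite dotE => /eqP; rewrite psumr_eq0 => [/allP x0|i _]; last by rewrite -expr2 sqr_ge0.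
apply/rowP => i; rewrite mxE; have := x0 i (mem_index_enum _).
by rewrite -expr2 sqrf_eq0 => /eqP.
Qed.

Lemma sphere_point_neq0 n (x : 'rV[R]_n) (r : R) : 0 < r -> dot x x = r ^+ 2 -> x != 0.
Proof.
move=> r_gt0 xr; apply/eqP => x0; move: xr.
by rewrite x0 dot0l => /eqP; rewrite eq_sym sqrf_eq0 gt_eqF.
Qed.

(* If [x, x0] and [y, y0] are two pairs of points at mutual distance 1, then
   [x - x0] is orthogonal to [y - y0]: this is why the two halves of a unit-distance
   embedding of a join live in orthogonal affine subspaces. *)
Lemma unit_cross_orthogonal n (x x0 y y0 : 'rV[R]_n) :
  dot (x - y) (x - y) = 1 -> dot (x - y0) (x - y0) = 1 ->
  dot (x0 - y) (x0 - y) = 1 -> dot (x0 - y0) (x0 - y0) = 1 ->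
  dot (x - x0) (y - y0) = 0.
Proof.
rewrite ?dotBl ?dotBr ?dotBl (dotC y x) (dotC y0 x) (dotC y x0) (dotC y0 x0).
by move=> h1 h2 h3 h4; lra.
Qed.

Lemma orthogonal_unit_sum n (d b : 'rV[R]_n) :
  dot d d = 1 -> dot (d + b) (d + b) = 1 -> dot d b = 0 -> b = 0.
Proof.
move=> dd1 db1 db0; apply: dot_eq0.
by move: db1; rewrite dotDl !dotDr (dotC b d) dd1 db0; lra.
Qed.

End InnerProduct.

Section OrthonormalRows.
Variables (R : rcfType) (n : nat).

(* [Q] has orthonormal rows; then [x |-> x *m Q^T] are coordinates on the row space
   of [Q] and [x |-> x *m Q^T *m Q] is the orthogonal projection onto it. *)
Definition orthonormal_rows m (Q : 'M[R]_(m, n)) : Prop := Q *m Q^T = 1%:M.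

Lemma orthonormal_proj_id m (Q : 'M[R]_(m, n)) (x : 'rV[R]_n) :
  orthonormal_rows Q -> (x <= Q)%MS -> x *m Q^T *m Q = x.
Proof. by move=> onQ /submxP [D ->]; rewrite -(mulmxA D) onQ mulmx1. Qed.

Lemma orthonormal_dot m (Q : 'M[R]_(m, n)) (x y : 'rV[R]_n) :
  orthonormal_rows Q -> (y <= Q)%MS -> dot (x *m Q^T) (y *m Q^T) = dot x y.
Proof. by move=> onQ yQ; rewrite dot_mulmx trmxK orthonormal_proj_id. Qed.

Lemma residual_orthogonal m (Q : 'M[R]_(m, n)) (u d : 'rV[R]_n) :
  orthonormal_rows Q -> (u <= Q)%MS -> dot u (d - d *m Q^T *m Q) = 0.
Proof.
move=> onQ uQ; rewrite dotBr [dot u (_ *m _)]dotC dot_mulmx dot_mulmx trmxK.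
by rewrite orthonormal_proj_id // dotC subrr.
Qed.

Lemma orthonormal_dist m (Q : 'M[R]_(m, n)) (x d : 'rV[R]_n) :
  orthonormal_rows Q -> (x <= Q)%MS ->
  let d' := d - d *m Q^T *m Q in
  dot (x *m Q^T - d *m Q^T) (x *m Q^T - d *m Q^T) = dot (x - d) (x - d) - dot d' d'.
Proof.
move=> onQ xQ d'; set p := d *m Q^T *m Q.
have xpQ : (x - p <= Q)%MS by rewrite addmx_sub ?eqmx_opp ?submxMl.
have -> : x *m Q^T - d *m Q^T = (x - p) *m Q^T.
  by rewrite mulmxBl -(mulmxA _ Q) onQ mulmx1.
have -> : x - d = (x - p) - d' by rewrite /d' opprB addrA subrK.
have := residual_orthogonal d onQ xpQ; rewrite orthonormal_dot // -/p -/d'.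
by move: (x - p) d' => u e ue0; rewrite dotBl !dotBr (dotC e u) ue0; lra.
Qed.

Lemma orthonormal_rows_le m (Q : 'M[R]_(m, n)) : orthonormal_rows Q -> (m <= n)%N.
Proof. exact: mulmx1_min. Qed.

(* With at least [n] rows, an orthonormal family is an orthonormal basis, so its
   columns are orthonormal too. *)
Lemma orthonormal_complete m (Q : 'M[R]_(m, n)) :
  orthonormal_rows Q -> (n <= m)%N -> Q^T *m Q = 1%:M.
Proof.
move=> onQ le_nm.
have full : row_full Q.
  rewrite /row_full eqn_leq rank_leq_col (leq_trans le_nm) //.
  by apply: (mulmx1_min_rank (M := 1%:M) (N := Q^T)); rewrite mul1mx.
have [X XQ1] := row_fullP full.
have QM0 : Q *m (Q^T *m Q - 1%:M) = 0 by rewrite mulmxBr mulmxA onQ mul1mx mulmx1 subrr.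
apply/eqP; rewrite -subr_eq0; apply/eqP; move: QM0; set M := _ - _ => QM0.
by rewrite -[M]mul1mx -XQ1 -mulmxA QM0 mulmx0.
Qed.

Lemma orthonormal_col_mx a b (QU : 'M[R]_(a, n)) (QW : 'M[R]_(b, n)) :
  orthonormal_rows QU -> orthonormal_rows QW -> QU *m QW^T = 0 ->
  orthonormal_rows (col_mx QU QW).
Proof.
move=> onU onW UW0; have WU0 : QW *m QU^T = 0 by rewrite -[QW]trmxK -trmx_mul UW0 trmx0.
by rewrite /orthonormal_rows tr_col_mx mul_col_row onU onW UW0 WU0 -scalar_mx_block.
Qed.

Lemma orthonormal_cons r (Q : 'M[R]_(r, n)) (w : 'rV[R]_n) :
  orthonormal_rows Q -> w *m Q^T = 0 -> w != 0 ->
  orthonormal_rows (col_mx ((Num.sqrt (dot w w))^-1 *: w) Q).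
Proof.
move=> onQ wQ0 w_neq0; set s := (Num.sqrt (dot w w))^-1.
have ww_gt0 : 0 < dot w w.
  by rewrite lt_def dot_ge0 andbT; apply: contra w_neq0 => /eqP/dot_eq0/eqP.
apply: orthonormal_col_mx => //; last first.
  by rewrite -scalemxAl wQ0 scaler0.
apply/rowP => i; rewrite ord1 -/(dot _ _) dotZl dotZr mulrA -expr2 /s exprVn.
by rewrite sqr_sqrtr ?dot_ge0 // mulVf ?gt_eqF // !mxE.
Qed.

Lemma orthonormal_extend r (Q' : 'M[R]_(r, n)) (v : 'rV[R]_n) :
  orthonormal_rows Q' -> exists s (Q : 'M[R]_(s, n)),
    [/\ orthonormal_rows Q, (v <= Q)%MS, (Q' <= Q)%MS & (Q <= col_mx v Q')%MS].
Proof.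
move=> onQ'; set w := v - v *m Q'^T *m Q'.
have vE : v = w + v *m Q'^T *m Q' by rewrite subrK.
have wQ'0 : w *m Q'^T = 0 by rewrite mulmxBl -!mulmxA onQ' mulmx1 subrr.
have vQ'_sub : (Q' <= col_mx v Q')%MS by rewrite -addsmxE addsmxSr.
have w_sub : (w <= col_mx v Q')%MS.
  rewrite addmx_sub ?eqmx_opp ?(submx_trans (submxMl _ _) vQ'_sub) //.
  by rewrite -addsmxE addsmxSl.
have [w0|w_neq0] := eqVneq w 0.
  exists r, Q'; split; rewrite ?submx_refl //.
  by rewrite vE w0 add0r submxMl.
set s := (Num.sqrt (dot w w))^-1.
have s_neq0 : s != 0 by rewrite invr_eq0 sqrtr_eq0 -ltNge lt_def dot_ge0 andbT;
  apply: contra w_neq0 => /eqP/dot_eq0/eqP.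
have Q'_sub : (Q' <= col_mx (s *: w) Q')%MS by rewrite -addsmxE addsmxSr.
exists (1 + r)%N, (col_mx (s *: w) Q'); split.
- exact: orthonormal_cons.
- rewrite vE addmx_sub // ?(submx_trans (submxMl _ _)) //.
  by rewrite -(eqmx_scale _ s_neq0) -addsmxE addsmxSl.
- exact: Q'_sub.
- by rewrite col_mx_sub scalemx_sub.
Qed.

Lemma gram_schmidt m (A : 'M[R]_(m, n)) :
  exists r (Q : 'M[R]_(r, n)), [/\ orthonormal_rows Q, (A <= Q)%MS & (Q <= A)%MS].
Proof.
elim: m A => [|m IH] A.
  by exists 0%N, 0; split; [apply/matrixP => -[] | apply/row_subP => -[] ..].
move: A; change m.+1 with (1 + m)%N => A; rewrite -[A]vsubmxK.
move: (usubmx A) (dsubmx A) => v A'.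
have [r [Q' [onQ' A'Q' Q'A']]] := IH A'.
have [s [Q [onQ vQ Q'Q Qsub]]] := orthonormal_extend v onQ'.
exists s, Q; split => //.
  by rewrite col_mx_sub vQ (submx_trans A'Q').
apply: (submx_trans Qsub); rewrite col_mx_sub -addsmxE addsmxSl.
by rewrite (submx_trans Q'A') // -addsmxE addsmxSr.
Qed.

End OrthonormalRows.

Section UnitDistanceEmbeddings.
Variable R : realType.
Implicit Types (n : nat) (V W : finType).

Lemma enorm_dot n (x : 'rV[R]_n) : enorm x = Num.sqrt (dot x x).
Proof. by rewrite /enorm dotE; congr Num.sqrt; apply: eq_bigr => i _; rewrite expr2. Qed.

Lemma enorm_eqE n (x : 'rV[R]_n) (r : R) :
  0 <= r -> (enorm x = r <-> dot x x = r ^+ 2).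
Proof.
move=> r_ge0; rewrite enorm_dot; split => [<-|->]; first by rewrite sqr_sqrtr ?dot_ge0.
by rewrite sqrtr_sqr ger0_norm.
Qed.

Lemma enorm_eq1 n (x : 'rV[R]_n) : enorm x = 1 <-> dot x x = 1.
Proof. by rewrite (enorm_eqE _ ler01) expr1n. Qed.

Lemma on_segment_sym n (a b w : 'rV[R]_n) : on_segment a b w -> on_segment b a w.
Proof.
case=> t [/andP [t_ge0 t_le1] ->]; exists (1 - t); split; first by apply/andP; split; lra.
by rewrite (_ : 1 - (1 - t) = t) 1?addrC //; ring.
Qed.

Lemma unit_dist_emb_translate V (e : rel V) n (f : V -> 'rV[R]_n) (c : 'rV[R]_n) :
  unit_dist_emb e f -> unit_dist_emb e (fun v => f v - c).
Proof.
move=> [f_inj [f_unit f_seg]]; split; [|split].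
- by move=> u v /addIr /f_inj.
- by move=> u v euv; rewrite opprB addrA subrK f_unit.
- move=> u v w euv wu wv [t [t01 wE]]; apply: (f_seg u v w euv wu wv).
  exists t; split => //; apply/(addIr (- c)); rewrite wE.
  by rewrite !scalerBr addrACA -opprD -scalerDl subrK scale1r.
Qed.

Lemma unit_dist_emb_coords V (e : rel V) n m (f : V -> 'rV[R]_n) (Q : 'M[R]_(m, n)) :
  orthonormal_rows Q -> (forall v, (f v <= Q)%MS) -> unit_dist_emb e f ->
  unit_dist_emb e (fun v => f v *m Q^T).
Proof.
move=> onQ fQ [f_inj [f_unit f_seg]].
have back v : f v *m Q^T *m Q = f v by apply: orthonormal_proj_id.
split; [|split].
- by move=> u v /(congr1 (mulmx^~ Q)); rewrite !back => /f_inj.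
- move=> u v euv; rewrite enorm_eq1 -mulmxBl orthonormal_dot -?enorm_eq1 ?f_unit //.
  by rewrite addmx_sub ?eqmx_opp.
- move=> u v w euv wu wv [t [t01 wE]]; apply: (f_seg u v w euv wu wv).
  by exists t; split => //; rewrite -back wE mulmxDl -!scalemxAl !back.
Qed.

Lemma unit_dist_emb_restrict V W (e : rel V) (e' : rel W) n (f : V -> 'rV[R]_n)
    (h : W -> V) :
  injective h -> (forall x y, e' x y = e (h x) (h y)) ->
  unit_dist_emb e f -> unit_dist_emb e' (f \o h).
Proof.
move=> h_inj eE [f_inj [f_unit f_seg]]; split; [|split].
- exact: inj_comp.
- by move=> x y; rewrite eE => /f_unit.
- by move=> x y z; rewrite eE => exy zx zy; apply: f_seg; rewrite ?(inj_eq h_inj).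
Qed.

Lemma sph_embeddable_centered V (e : rel V) n (r : R) :
  sph_embeddable e n r ->
  exists g : V -> 'rV[R]_n, unit_dist_emb e g /\ forall v, dot (g v) (g v) = r ^+ 2.
Proof.
case=> f [c [f_emb f_rad]]; exists (fun v => f v - c); split.
  exact: unit_dist_emb_translate.
by move=> v; rewrite -(f_rad v) enorm_dot sqr_sqrtr ?dot_ge0.
Qed.

(* The vertices of a regular simplex with unit edges (scaled standard basis vectors)
   give a spherical embedding of any graph, of radius sqrt(1/2) < 1. *)
Lemma simplex_sph_embeddable V (e : rel V) :
  irreflexive e -> sph_embeddable e #|V| (Num.sqrt (2^-1 : R)).
Proof.
move=> e_irr; set s : R := Num.sqrt 2^-1.
have s2 : s ^+ 2 = 2^-1 by rewrite sqr_sqrtr // invr_ge0 ler0n.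
have s_neq0 : s != 0 by rewrite sqrtr_eq0 -ltNge invr_gt0 ltr0n.
pose f (v : V) : 'rV[R]_#|V| := s *: delta_mx 0 (enum_rank v).
have fE v k : f v 0 k = s * (enum_rank v == k)%:R by rewrite !mxE eqxx eq_sym.
have f_dot u v : dot (f u) (f v) = s ^+ 2 * (u == v)%:R.
  rewrite dotE (bigD1 (enum_rank u)) //= big1 => [|k /negbTE ku].
    rewrite !fE eqxx (inj_eq enum_rank_inj) eq_sym.
    by case: eqP; rewrite ?mulr1 ?mulr0 ?expr2 addr0.
  by rewrite fE eq_sym ku mulr0 mul0r.
have f_unit u v : u != v -> enorm (f u - f v) = 1.
  move=> uv; rewrite enorm_eq1 dotBl !dotBr !f_dot !eqxx (negbTE uv) eq_sym (negbTE uv).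
  by rewrite mulr1 mulr0 s2; lra.
clearbody f; exists f, 0; split; [split; [|split] |].
- move=> u v /(congr1 (fun x : 'rV[R]_#|V| => x 0 (enum_rank u))); rewrite !fE eqxx mulr1.
  by case: eqP => [/enum_rank_inj -> //|_] /eqP; rewrite mulr0 (negbTE s_neq0).
- by move=> u v euv; apply: f_unit; apply: contraTneq euv => ->; rewrite e_irr.
- move=> u v w _ wu wv [t [_ /(congr1 (fun x : 'rV[R]_#|V| => x 0 (enum_rank w)))]].
  rewrite !mxE !fE eqxx mulr1 !(inj_eq enum_rank_inj) eq_sym (negbTE wu) eq_sym (negbTE wv).
  by rewrite !mulr0 addr0 => /eqP; rewrite (negbTE s_neq0).
- by move=> v; rewrite subr0 enorm_dot f_dot eqxx mulr1 sqrtr_sqr ger0_norm ?sqrtr_ge0.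
Qed.

End UnitDistanceEmbeddings.

Lemma on_segment_row_mx (R : realType) k1 k2 (a c x : 'rV[R]_k1) (b d y : 'rV[R]_k2) :
  on_segment (row_mx a b) (row_mx c d) (row_mx x y) ->
  exists2 t : R, 0 <= t <= 1 & x = (1 - t) *: a + t *: c /\ y = (1 - t) *: b + t *: d.
Proof.
by case=> t [t01]; rewrite !scale_row_mx add_row_mx => /eq_row_mx xy; exists t.
Qed.

Section JoinEmbedding.
Variables (R : realType) (V1 V2 : finType) (e1 : rel V1) (e2 : rel V2) (k1 k2 : nat).
Variables (g1 : V1 -> 'rV[R]_k1) (g2 : V2 -> 'rV[R]_k2) (r1 r2 : R).
Hypotheses (g1_emb : unit_dist_emb e1 g1) (g2_emb : unit_dist_emb e2 g2).
Hypotheses (g1_sph : forall v, dot (g1 v) (g1 v) = r1 ^+ 2)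
           (g2_sph : forall v, dot (g2 v) (g2 v) = r2 ^+ 2).
Hypotheses (r1_gt0 : 0 < r1) (r2_gt0 : 0 < r2) (r12 : r1 ^+ 2 + r2 ^+ 2 = 1).

(* Two centred spherical embeddings placed in orthogonal subspaces of [R^(k1 + k2)]:
   when the squared radii add up to 1, every cross pair is at distance 1. *)
Definition join_map (x : V1 + V2) : 'rV[R]_(k1 + k2) :=
  match x with inl v => row_mx (g1 v) 0 | inr w => row_mx 0 (g2 w) end.

Let g1_neq0 v : g1 v != 0. Proof. exact: sphere_point_neq0 (g1_sph v). Qed.
Let g2_neq0 w : g2 w != 0. Proof. exact: sphere_point_neq0 (g2_sph w). Qed.

Lemma join_map_inj : injective join_map.
Proof.
case=> [u|u] [v|v] /= /eq_row_mx [uv1 uv2].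
- by rewrite (g1_emb.1 _ _ uv1).
- by move: (g1_neq0 u); rewrite uv1 eqxx.
- by move: (g1_neq0 v); rewrite -uv1 eqxx.
- by rewrite (g2_emb.1 _ _ uv2).
Qed.

Lemma join_map_unit x y :
  graph_sum e1 e2 x y -> enorm (join_map x - join_map y) = 1.
Proof.
rewrite enorm_eq1; case: x y => [u|u] [v|v] /= exy;
  rewrite opp_row_mx add_row_mx dot_row_mx.
- by rewrite subrr dot0l addr0; apply/enorm_eq1/g1_emb.2.1.
- by rewrite subr0 sub0r dotNN g1_sph g2_sph.
- by rewrite subr0 sub0r dotNN g1_sph g2_sph.
- by rewrite subrr dot0l add0r; apply/enorm_eq1/g2_emb.2.1.
Qed.

Lemma join_map_cross_segment (u : V1) (v : V2) z :
  on_segment (join_map (inl u)) (join_map (inr v)) (join_map z) -> z = inl u \/ z = inr v.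
Proof.
case: z => [w|w] /= /on_segment_row_mx [t _ []]; rewrite !scaler0 ?addr0 ?add0r.
- move=> w1 /eqP; rewrite eq_sym scaler_eq0 (negbTE (g2_neq0 v)) orbF => /eqP t0.
  by left; rewrite (g1_emb.1 w u) // w1 t0 subr0 scale1r.
- move=> /eqP; rewrite eq_sym scaler_eq0 (negbTE (g1_neq0 u)) orbF subr_eq0 => /eqP t1 w2.
  by right; rewrite (g2_emb.1 w v) // w2 -t1 scale1r.
Qed.

Lemma join_map_segment x y z :
  graph_sum e1 e2 x y -> z != x -> z != y ->
  ~ on_segment (join_map x) (join_map y) (join_map z).
Proof.
move=> exy zx zy seg.
have cross u v z' : on_segment (join_map (inl u)) (join_map (inr v)) (join_map z') ->
    z' != inl u -> z' != inr v -> False.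
  by case/join_map_cross_segment => ->; rewrite eqxx // => _ /negP.
case: x y z exy zx zy seg => [u|u] [v|v] [w|w] exy zx zy seg;
  try solve [exact: cross seg zx zy | exact: cross (on_segment_sym seg) zy zx].
- apply: (g1_emb.2.2 u v w exy); rewrite -?(inj_eq (@inl_inj V1 V2)) //.
  by case/on_segment_row_mx: seg => t t01 [wE _]; exists t.
- case/on_segment_row_mx: seg => t _ [_]; rewrite !scaler0 addr0 => /eqP.
  by rewrite (negbTE (g2_neq0 w)).
- case/on_segment_row_mx: seg => t _ []; rewrite !scaler0 addr0 => /eqP.
  by rewrite (negbTE (g1_neq0 w)).
- apply: (g2_emb.2.2 u v w exy); rewrite -?(inj_eq (@inr_inj V1 V2)) //.
  by case/on_segment_row_mx: seg => t t01 [_ wE]; exists t.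
Qed.

Lemma join_map_emb : unit_dist_emb (graph_sum e1 e2) join_map.
Proof.
by split; [exact: join_map_inj | split; [exact: join_map_unit | exact: join_map_segment]].
Qed.

End JoinEmbedding.

Lemma join_embeddable (R : realType) (V1 V2 : finType) (e1 : rel V1) (e2 : rel V2)
    (k1 k2 : nat) (r1 r2 : R) :
  0 < r1 -> 0 < r2 -> r1 ^+ 2 + r2 ^+ 2 = 1 ->
  sph_embeddable e1 k1 r1 -> sph_embeddable e2 k2 r2 ->
  embeddable R (graph_sum e1 e2) (k1 + k2).
Proof.
move=> r1_gt0 r2_gt0 r12 /sph_embeddable_centered [g1 [emb1 sph1]].
move=> /sph_embeddable_centered [g2 [emb2 sph2]].
by exists (join_map g1 g2); apply: join_map_emb r12.
Qed.

Lemma difference_basis (R : rcfType) (V : finType) n (f : V -> 'rV[R]_n) (v0 : V) :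
  exists a (Q : 'M[R]_(a, n)), [/\ orthonormal_rows Q, forall v, (f v - f v0 <= Q)%MS &
    forall y, (forall v, dot (f v - f v0) y = 0) -> y *m Q^T = 0].
Proof.
pose A := \matrix_(i < #|V|) (f (enum_val i) - f v0).
have rowA v : row (enum_rank v) A = f v - f v0 by rewrite rowK enum_rankK.
have [a [Q [onQ AQ QA]]] := gram_schmidt A.
exists a, Q; split => // [v|y y_orth].
  exact: submx_trans (eq_row_sub _ (rowA v)) AQ.
have yA0 : y *m A^T = 0.
  by apply/rowP => i; rewrite -dot_row rowK dotC y_orth !mxE.
by have [D ->] := submxP QA; rewrite trmx_mul mulmxA yA0 mul0mx.
Qed.

(* If two orthonormal families with orthogonal spans have [n] vectors in total, the
   projections on them add up to the identity; hence for a unit vector [d] the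
   squared distances of [d] and [-d] to the two spans add up to 1. *)
Lemma complementary_radii (R : rcfType) n a b (QU : 'M[R]_(a, n)) (QW : 'M[R]_(b, n))
    (d : 'rV[R]_n) :
  orthonormal_rows QU -> orthonormal_rows QW -> QU *m QW^T = 0 -> (a + b)%N = n ->
  dot d d = 1 ->
  let dU := d - d *m QU^T *m QU in let dW := - d - (- d) *m QW^T *m QW in
  (1 - dot dU dU) + (1 - dot dW dW) = 1.
Proof.
move=> onU onW UW0 abn dd1 dU dW.
have := orthonormal_complete (orthonormal_col_mx onU onW UW0) (eq_leq (esym abn)).
rewrite tr_col_mx mul_row_col => PUW; set x := d *m QU^T *m QU; set y := d *m QW^T *m QW.
have dE : d = x + y by rewrite /x /y -!mulmxA -mulmxDr PUW mulmx1.
have -> : dU = y by rewrite /dU -/x {1}dE addrAC subrr add0r.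
have -> : dW = - x by rewrite /dW !mulNmx opprK -/y {1}dE opprD subrK.
have xy0 : dot x y = 0.
  have WU0 : QW *m QU^T = 0 by rewrite -[QW]trmxK -trmx_mul UW0 trmx0.
  by rewrite /x /y dot_mulmx -!mulmxA WU0 !mulmx0 dot0r.
move: dd1; rewrite dotNN dE dotDl !dotDr (dotC y x) xy0; lra.
Qed.

Section OneSide.
(* One half [f] of a unit-distance embedding of a join, seen from the other half [g].  By Pythagoras, in
   coordinates on the affine span of [f] the points [f v] are at distance
   [sqrt (1 - |d'|^2)] from the projection of [g w0], where [d'] is the offset of
   [g w0] from that affine span. *)
Variables (R : realType) (V W : finType) (e : rel V) (n a : nat).
Variables (f : V -> 'rV[R]_n) (g : W -> 'rV[R]_n) (Q : 'M[R]_(a, n)) (v0 : V) (w0 : W).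
Hypotheses (f_emb : unit_dist_emb e f) (g_inj : injective g).
Hypotheses (cardV : (1 < #|V|)%N) (cardW : (1 < #|W|)%N).
Hypothesis cross_unit : forall v w, dot (f v - g w) (f v - g w) = 1.
Hypotheses (onQ : orthonormal_rows Q) (f_in_Q : forall v, (f v - f v0 <= Q)%MS).
Hypothesis g_orth_Q : forall w, (g w - g w0) *m Q^T = 0.

Let d := g w0 - f v0.
Let d' := d - d *m Q^T *m Q.
Let p v := (f v - f v0) *m Q^T.
Let c := d *m Q^T.

Let p_emb : unit_dist_emb e p.
Proof. exact/(unit_dist_emb_coords onQ f_in_Q)/unit_dist_emb_translate. Qed.

Let p_dist v : dot (p v - c) (p v - c) = 1 - dot d' d'.
Proof. by rewrite orthonormal_dist // /d opprB addrA subrK cross_unit. Qed.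

(* The radius is positive, because [f] has two distinct vertices. *)
Let radius_gt0 : 0 < 1 - dot d' d'.
Proof.
rewrite ltNge; apply/negP => rad_le0; have [v [v' [_ _ vv']]] := card_gt1P cardV.
have p_const x : p x = c.
  apply/eqP; rewrite -subr_eq0; apply/eqP/dot_eq0/eqP.
  by rewrite eq_le dot_ge0 andbT p_dist.
by move: vv'; rewrite (p_emb.1 v v') ?eqxx // !p_const.
Qed.

(* The offset is nonzero, because [g] has two distinct vertices. *)
Let offset_gt0 : 0 < dot d' d'.
Proof.
rewrite lt_def dot_ge0 andbT; apply/negP => /eqP/dot_eq0/eqP.
rewrite subr_eq0 => /eqP dE; have [w [w' [_ _ ww']]] := card_gt1P cardW.
have g_const x : g x = g w0.
  apply/eqP; rewrite -subr_eq0; apply/eqP/(@orthogonal_unit_sum _ _ d).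
  - by rewrite /d -opprB dotNN cross_unit.
  - by rewrite /d addrC addrA subrK -opprB dotNN cross_unit.
  - by rewrite dE dot_mulmx dot_mulmx trmxK g_orth_Q mul0mx dot0r.
by move: ww'; rewrite (g_inj (g_const w)) (g_inj (g_const w')) eqxx.
Qed.

Lemma side_sph_embeddable :
  exists r : R, [/\ 0 < r < 1, r ^+ 2 = 1 - dot d' d' & sph_embeddable e a r].
Proof.
exists (Num.sqrt (1 - dot d' d')); split.
- rewrite sqrtr_gt0 radius_gt0 -[X in _ < X]sqrtr1 ltr_sqrt ?ltr01 //.
  by rewrite ltrBlDr ltrDl offset_gt0.
- by rewrite sqr_sqrtr // ltW.
- by exists p, c; split => // v; rewrite enorm_dot p_dist.
Qed.

End OneSide.

Lemma join_embedding_split (R : realType) (V1 V2 : finType) (e1 : rel V1) (e2 : rel V2)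
    n (F : V1 + V2 -> 'rV[R]_n) :
  (1 < #|V1|)%N -> (1 < #|V2|)%N -> unit_dist_emb (graph_sum e1 e2) F ->
  exists a b (r1 r2 : R), [/\ (a + b <= n)%N, 0 < r1 < 1, 0 < r2 < 1,
     sph_embeddable e1 a r1 /\ sph_embeddable e2 b r2 &
     ((a + b)%N = n -> r1 ^+ 2 + r2 ^+ 2 = 1)].
Proof.
move=> card1 card2 F_emb; pose f1 := F \o inl; pose f2 := F \o inr.
have emb1 : unit_dist_emb e1 f1 by apply: unit_dist_emb_restrict F_emb => //; exact: inl_inj.
have emb2 : unit_dist_emb e2 f2 by apply: unit_dist_emb_restrict F_emb => //; exact: inr_inj.
have cross x y : graph_sum e1 e2 x y -> dot (F x - F y) (F x - F y) = 1.
  by move/F_emb.2.1/enorm_eq1.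
have [g0 _] := card_gt0P (ltnW card1); have [h0 _] := card_gt0P (ltnW card2).
have [a [QU [onU inU annU]]] := difference_basis f1 g0.
have [b [QW [onW inW annW]]] := difference_basis f2 h0.
have orthGH g h : dot (f1 g - f1 g0) (f2 h - f2 h0) = 0.
  by apply: unit_cross_orthogonal; apply: cross.
have QU_H h : (f2 h - f2 h0) *m QU^T = 0 by apply: annU => g; rewrite orthGH.
have QW_G g : (f1 g - f1 g0) *m QW^T = 0 by apply: annW => h; rewrite dotC orthGH.
have UW0 : QU *m QW^T = 0.
  by apply/row_matrixP => i; rewrite row_mul row0; apply: annW => h; rewrite dot_row QU_H mxE.
have [r1 [r1_01 r1E sph1]] := side_sph_embeddable emb1 (inj_comp F_emb.1 inr_inj) card1 card2
  (fun g h => cross (inl g) (inr h) isT) onU inU QU_H.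
have [r2 [r2_01 r2E sph2]] := side_sph_embeddable emb2 (inj_comp F_emb.1 inl_inj) card2 card1
  (fun h g => cross (inr h) (inl g) isT) onW inW QW_G.
exists a, b, r1, r2; split => // [|abn].
  exact: orthonormal_rows_le (orthonormal_col_mx onU onW UW0).
rewrite r1E r2E -[f1 g0 - _]opprB; apply: complementary_radii => //.
exact: cross (inr h0) (inl g0) isT.
Qed.

Lemma ex_minimal (P : nat -> Prop) :
  (exists n, P n) -> exists n, P n /\ forall m, (m < n)%N -> ~ P m.
Proof.
case=> n; elim/ltn_ind: n => n IH Pn.
have [[m lt_mn Pm]|none] := classic (exists2 m, (m < n)%N & P m); first exact: IH Pm.
by exists n; split => // m lt_mn Pm; apply: none; exists m.
Qed.

(* Every graph with an irreflexive edge relation has a spherical embedding of radius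
   less than 1, so the spherical dimension is well defined. *)
Lemma sph_small_card (R : realType) (V : finType) (e : rel V) :
  irreflexive e -> sph_small R e #|V|.
Proof.
move=> e_irr; exists (Num.sqrt 2^-1); split; last exact: simplex_sph_embeddable.
by rewrite -[X in _ < X]sqrtr1 ltr_sqrt ?ltr01 //; lra.
Qed.

Unset Implicit Arguments.
Theorem mainTheorem5 (R : realType) (V1 V2 : finType) (e1 : rel V1) (e2 : rel V2)
  (sym1 : symmetric e1) (irr1 : irreflexive e1)
  (sym2 : symmetric e2) (irr2 : irreflexive e2)
  (card1 : (1 < #|V1|)%N) (card2 : (1 < #|V2|)%N) :
  exists n k1 k2 : nat,
    [/\ is_dim R (graph_sum e1 e2) n, is_sdim R e1 k1, is_sdim R e2 k2 &
      ((exists r1 r2 : R,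
          [/\ 0 < r1 < 1, 0 < r2 < 1, r1 ^+ 2 + r2 ^+ 2 = 1,
              sph_embeddable e1 k1 r1 & sph_embeddable e2 k2 r2]) ->
         n = (k1 + k2)%N) /\
      (~ (exists r1 r2 : R,
          [/\ 0 < r1 < 1, 0 < r2 < 1, r1 ^+ 2 + r2 ^+ 2 = 1,
              sph_embeddable e1 k1 r1 & sph_embeddable e2 k2 r2]) ->
         (k1 + k2 < n)%N)].
Proof.
have sum_irr : irreflexive (graph_sum e1 e2) by case=> x /=; [exact: irr1 | exact: irr2].
have [n [[F F_emb] n_min]] : exists n, is_dim R (graph_sum e1 e2) n.
  apply: ex_minimal; have [F [_ [F_emb _]]] := simplex_sph_embeddable R sum_irr.
  by exists _, F.
have [k1 [k1_small k1_min]] : exists k, is_sdim R e1 k.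
  by apply: ex_minimal; exists #|V1|; exact: sph_small_card.
have [k2 [k2_small k2_min]] : exists k, is_sdim R e2 k.
  by apply: ex_minimal; exists #|V2|; exact: sph_small_card.
(* Splitting an optimal embedding of the join bounds [k1 + k2] by [n]. *)
have [a [b [r1 [r2 [ab_le_n r1_01 r2_01 [sph1 sph2] r12]]]]] :=
  join_embedding_split card1 card2 F_emb.
have k1_le_a : (k1 <= a)%N.
  by rewrite leqNgt; apply/negP => /k1_min; apply; exists r1; case/andP: r1_01.
have k2_le_b : (k2 <= b)%N.
  by rewrite leqNgt; apply/negP => /k2_min; apply; exists r2; case/andP: r2_01.
exists n, k1, k2; split; [by split; [exists F|] | by [] | by [] | split].
(* With suitable radii the upper bound gives [n <= k1 + k2]. *)
- case=> r1' [r2' [/andP [r1'_gt0 _] /andP [r2'_gt0 _] r12' sph1' sph2']].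
  have : ~ (k1 + k2 < n)%N by move/n_min; apply; exact: join_embeddable sph1' sph2'.
  lia.
(* If [n = k1 + k2] then [a = k1] and [b = k2], and the radii of the split fit. *)
- move=> no_radii; rewrite ltn_neqAle; apply/andP; split; last by lia.
  apply/negP => /eqP n_eq; apply: no_radii.
  have [a_eq b_eq] : a = k1 /\ b = k2 by lia.
  rewrite a_eq b_eq in sph1 sph2 r12.
  by exists r1, r2; split => //; apply: r12.
Qed.
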